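(* Let $H$ be a locally quasi-convex abelian topological group and $h:\mathbb{R}\to H$ a continuous homomorphism. Define $T_H:\mathbb{R}^{(\mathbb{N})}\to L_G(\mathbf{s})\times\mathfrak{F}_0(H)$ by $T_H((x_k))=\big((x_k),(h(x_k))\big)$, and let $\mathcal{T}_H$ be the group topology on $\mathbb{R}^{(\mathbb{N})}$ induced via the injective homomorphism $T_H$ from the product topology. Then $\mathcal{T}_H$ is a locally quasi-convex group topology which is coarser than the box topology on $\mathbb{R}^{(\mathbb{N})}$, finer than $\boldsymbol{\nu}$, and compatible with $\boldsymbol{\nu}$, i.e. $(\mathbb{R}^{(\mathbb{N})},\mathcal{T}_H)$ and $(\mathbb{R}^{(\mathbb{N})},\boldsymbol{\nu})$ have the same continuous characters.
   Context: $\mathbb{R}^{(\mathbb{N})}$ is the space of finitely supported real sequences, $e_n$ the $n$-th unit vector, and $\boldsymbol{\nu}$ the finest locally convex vector topology on $\mathbb{R}^{(\mathbb{N})}$ in which $e_n\to0$; $L_G(\mathbf{s})=(\mathbb{R}^{(\mathbb{N})},\boldsymbol{\nu})$ is the Graev free locally convex space over $\mathbf{s}=\{1/n\}\cup\{0\}$. The box topology on $\mathbb{R}^{(\mathbb{N})}$ is the topology induced from the box product topology on $\mathbb{R}^{\mathbb{N}}$. For an abelian topological group $G$, $c_0(G)$ is the group of sequences $(x_n)\in G^{\mathbb{N}}$ with $x_n\to0$, and $\mathfrak{F}_0(G)$ is $c_0(G)$ with the uniform topology, whose base at $0$ is $\{c_0(G)\cap V^{\mathbb{N}} : V \text{ a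 neighborhood of } 0 \text{ in } G\}$. Let $\mathbb{S}$ be the unit circle, $\mathbb{S}_+=\{z\in\mathbb{S}:\mathrm{Re}\,z\ge0\}$; a character is a continuous homomorphism into $\mathbb{S}$. A subset $A$ of an abelian topological group $G$ is quasi-convex if for every $g\notin A$ there is a character $\chi$ with $\chi(A)\subseteq\mathbb{S}_+$ and $\chi(g)\notin\mathbb{S}_+$; $G$ is locally quasi-convex if it has a base at $0$ of quasi-convex sets. *)

From Stdlib Require Import Reals Lra Lia List.
Open Scope R_scope.

Definition is_topology {X : Type} (tau : (X -> Prop) -> Prop) : Prop :=
  tau (fun _ => True) /\
  (forall F : (X -> Prop) -> Prop, (forall U, F U -> tau U) ->
      tau (fun x => exists U, F U /\ U x)) /\
  (forall U V, tau U -> tau V -> tau (fun x => U x /\ V x)).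

Definition nbhd {X : Type} (tau : (X -> Prop) -> Prop) (x : X) (N : X -> Prop) : Prop :=
  exists O, tau O /\ O x /\ forall y, O y -> N y.

Definition cont2 {X : Type} (tau : (X -> Prop) -> Prop) (f : X -> X -> X) : Prop :=
  forall x y W, tau W -> W (f x y) ->
    exists U V, tau U /\ tau V /\ U x /\ V y /\
      forall x' y', U x' -> V y' -> W (f x' y').

Definition cont1 {X : Type} (tau : (X -> Prop) -> Prop) (f : X -> X) : Prop :=
  forall x W, tau W -> W (f x) ->
    exists U, tau U /\ U x /\ forall x', U x' -> W (f x').

Definition is_abelian_group {G : Type} (add : G -> G -> G) (opp : G -> G) (zero : G) : Prop :=
  (forall x y z, add x (add y z) = add (add x y) z) /\
  (forall x y, add x y = add y x) /\
  (forall x, add x zero = x) /\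
  (forall x, add x (opp x) = zero).

Definition is_group_topology {G : Type} (add : G -> G -> G) (opp : G -> G)
  (tau : (G -> Prop) -> Prop) : Prop :=
  is_topology tau /\ cont2 tau add /\ cont1 tau opp.

Definition is_abelian_topgroup {G : Type} (add : G -> G -> G) (opp : G -> G) (zero : G)
  (tau : (G -> Prop) -> Prop) : Prop :=
  is_abelian_group add opp zero /\ is_group_topology add opp tau.

Definition cmul (p q : R * R) : R * R :=
  (fst p * fst q - snd p * snd q, fst p * snd q + snd p * fst q).

Definition on_circle (p : R * R) : Prop := fst p ^ 2 + snd p ^ 2 = 1.

Definition in_Splus (p : R * R) : Prop := 0 <= fst p.

Definition is_character {G : Type} (add : G -> G -> G) (tau : (G -> Prop) -> Prop)
  (chi : G -> R * R) : Prop :=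
  (forall x, on_circle (chi x)) /\
  (forall x y, chi (add x y) = cmul (chi x) (chi y)) /\
  (forall x eps, 0 < eps -> exists O, tau O /\ O x /\
     forall y, O y -> (fst (chi y) - fst (chi x)) ^ 2 + (snd (chi y) - snd (chi x)) ^ 2 < eps ^ 2).

Definition quasi_convex {G : Type} (add : G -> G -> G) (tau : (G -> Prop) -> Prop)
  (A : G -> Prop) : Prop :=
  forall g, ~ A g -> exists chi, is_character add tau chi /\
    (forall a, A a -> in_Splus (chi a)) /\ ~ in_Splus (chi g).

Definition locally_quasi_convex {G : Type} (add : G -> G -> G) (zero : G)
  (tau : (G -> Prop) -> Prop) : Prop :=
  forall U, nbhd tau zero U ->
    exists V, nbhd tau zero V /\ quasi_convex add tau V /\ forall x, V x -> U x.

Definition RN : Type := { x : nat -> R | exists N, forall n, (N <= n)%nat -> x n = 0 }.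

Definition RNv (x : RN) : nat -> R := proj1_sig x.

Lemma RN_add_fin (x y : RN) :
  exists N, forall n, (N <= n)%nat -> RNv x n + RNv y n = 0.
Proof.
  destruct x as [x [N1 H1]], y as [y [N2 H2]]; simpl.
  exists (N1 + N2)%nat; intros n Hn. rewrite H1, H2 by lia. lra.
Qed.
Definition RN_add (x y : RN) : RN := exist _ (fun n => RNv x n + RNv y n) (RN_add_fin x y).

Lemma RN_opp_fin (x : RN) : exists N, forall n, (N <= n)%nat -> - RNv x n = 0.
Proof.
  destruct x as [x [N1 H1]]; simpl. exists N1; intros n Hn. rewrite H1 by lia. lra.
Qed.
Definition RN_opp (x : RN) : RN := exist _ (fun n => - RNv x n) (RN_opp_fin x).

Lemma RN_scal_fin (t : R) (x : RN) : exists N, forall n, (N <= n)%nat -> t * RNv x n = 0.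
Proof.
  destruct x as [x [N1 H1]]; simpl. exists N1; intros n Hn. rewrite H1 by lia. lra.
Qed.
Definition RN_scal (t : R) (x : RN) : RN := exist _ (fun n => t * RNv x n) (RN_scal_fin t x).

Lemma RN_zero_fin : exists N, forall n, (N <= n)%nat -> (fun _ : nat => 0) n = 0.
Proof. exists 0%nat; reflexivity. Qed.
Definition RN_zero : RN := exist _ (fun _ => 0) RN_zero_fin.

Lemma RN_unit_fin (k : nat) :
  exists N, forall n, (N <= n)%nat -> (if Nat.eqb n k then 1 else 0) = 0.
Proof.
  exists (S k); intros n Hn. destruct (Nat.eqb_spec n k); [lia | reflexivity].
Qed.
Definition RN_unit (k : nat) : RN :=
  exist _ (fun n => if Nat.eqb n k then 1 else 0) (RN_unit_fin k).

Definition convex_RN (C : RN -> Prop) : Prop :=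
  forall x y t, C x -> C y -> 0 <= t <= 1 ->
    C (RN_add (RN_scal t x) (RN_scal (1 - t) y)).

Definition is_lc_vector_topology_en0 (tau : (RN -> Prop) -> Prop) : Prop :=
  is_topology tau /\
  cont2 tau RN_add /\
  (forall t x W, tau W -> W (RN_scal t x) ->
     exists d U, 0 < d /\ tau U /\ U x /\
       forall t' x', Rabs (t' - t) < d -> U x' -> W (RN_scal t' x')) /\
  (forall U, nbhd tau RN_zero U ->
     exists C, nbhd tau RN_zero C /\ convex_RN C /\ forall x, C x -> U x) /\
  (forall U, nbhd tau RN_zero U ->
     exists N, forall n, (N <= n)%nat -> U (RN_unit n)).

(* nu: the finest locally convex vector topology in which e_n -> 0, i.e. the
   supremum of all such topologies: the topology generated by their union
   (open sets = unions of finite intersections of sets open in one of them). *)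
Definition nu_open (U : RN -> Prop) : Prop :=
  forall x, U x ->
    exists l : list (((RN -> Prop) -> Prop) * (RN -> Prop)),
      (forall p, In p l -> is_lc_vector_topology_en0 (fst p) /\ (fst p) (snd p) /\ snd p x) /\
      (forall y, (forall p, In p l -> snd p y) -> U y).

Definition box_open (U : RN -> Prop) : Prop :=
  forall x, U x -> exists eps : nat -> R, (forall n, 0 < eps n) /\
    forall y, (forall n, Rabs (RNv y n - RNv x n) < eps n) -> U y.

Section F0.
Context {H : Type} (addH : H -> H -> H) (zeroH : H) (tauH : (H -> Prop) -> Prop).

Definition is_c0 (b : nat -> H) : Prop :=
  forall U, nbhd tauH zeroH U -> exists N, forall n, (N <= n)%nat -> U (b n).

(* B (intersected with c_0(H)) is open in the uniform topology of F_0(H),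
   whose base at 0 is { c_0(H) /\ V^N : V neighbourhood of 0 in H }. *)
Definition F0_open (B : (nat -> H) -> Prop) : Prop :=
  forall b, is_c0 b -> B b -> exists V, nbhd tauH zeroH V /\
    forall y, is_c0 y -> (forall n, V (y n)) -> B (fun n => addH (b n) (y n)).

(* open sets of the product L_G(s) x F_0(H), viewed as relations on RN x c_0(H) *)
Definition prod_open (W : RN -> (nat -> H) -> Prop) : Prop :=
  forall a b, is_c0 b -> W a b ->
    exists A B, nu_open A /\ A a /\ F0_open B /\ B b /\
      forall a' b', is_c0 b' -> A a' -> B b' -> W a' b'.

Definition T_H2 (h : R -> H) (x : RN) : nat -> H := fun n => h (RNv x n).

Definition tau_TH (h : R -> H) (U : RN -> Prop) : Prop :=
  exists W, prod_open W /\ forall x, U x <-> W x (T_H2 h x).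
End F0.

From Pilot Require Import Defs.
From Stdlib Require Import Reals Lra Lia List ClassicalEpsilon FunctionalExtensionality Classical.
Open Scope R_scope.

(* Everything is controlled by weighted l^1 seminorms [wnorm w x = sum_k w_k |x_k|] with
   weights [w_k -> 0].  A convex neighbourhood of 0 in a locally convex topology with [e_n -> 0]
   contains points [+-e_k / w_k] with [w_k -> 0], hence the ball [wnorm w < 1]; so the
   [nu]-neighbourhoods of [x] are generated by such balls, and those of [T_H] by the sets
   [wnorm w (z - x) <= 1 /\ forall k, h (z_k - x_k) in V].  This gives the group topology and
   the comparison with the box topology.  These sets (at 0) are quasi-convex: a character
   [cis (c lin a)] separates a point from the ball, a character of [H] composed with a coordinate
   separates it from the rest.  Finally a [T_H]-continuous character sends such a neighbourhood
   into a sector of the circle, where it has an additive logarithm; that logarithm is linear on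
   each axis, with slopes tending to 0, so the character is [cis o lin a], which is
   [nu]-continuous. *)

Lemma RN_ext (x y : RN) : (forall n, RNv x n = RNv y n) -> x = y.
Proof.
  destruct x as [x px], y as [y py]; simpl; intros E.
  assert (x = y) by (apply functional_extensionality; exact E); subst.
  f_equal; apply proof_irrelevance.
Qed.

Ltac RN_eq := apply RN_ext; intros; simpl; try ring.

Definition RN_sub (y x : RN) : RN := RN_add y (RN_opp x).

Definition supp_bound (x : RN) : nat :=
  proj1_sig (constructive_indefinite_description _ (proj2_sig x)).

Lemma supp_bound_spec (x : RN) n : (supp_bound x <= n)%nat -> RNv x n = 0.
Proof.
  unfold supp_bound; destruct (constructive_indefinite_description _ _) as [N HN]; apply HN.
Qed.

Lemma RN_ind (P : RN -> Prop) :
  P RN_zero ->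
  (forall x k t, (forall n, (k <= n)%nat -> RNv x n = 0) -> P x ->
     P (RN_add x (RN_scal t (RN_unit k)))) ->
  forall x, P x.
Proof.
  intros P0 Pstep.
  assert (G : forall N x, (forall n, (N <= n)%nat -> RNv x n = 0) -> P x).
  { induction N as [|N IH]; intros x Hx.
    - replace x with RN_zero; auto. apply RN_ext; intros n; rewrite Hx by lia; reflexivity.
    - set (f := fun n => if Nat.eqb n N then 0 else RNv x n).
      assert (Hf : forall n, (N <= n)%nat -> f n = 0).
      { intros n Hn; unfold f; destruct (Nat.eqb_spec n N); auto; apply Hx; lia. }
      replace x with (RN_add (exist _ f (ex_intro _ N Hf)) (RN_scal (RNv x N) (RN_unit N))).
      + apply Pstep; [exact Hf | apply IH, Hf].
      + apply RN_ext; intros n; simpl; unfold f.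
        destruct (Nat.eqb_spec n N); subst; ring. }
  intros x; exact (G _ x (supp_bound_spec x)).
Qed.

Lemma sum_f_R0_eventually_zero (f : nat -> R) N M :
  (forall n, (N <= n)%nat -> f n = 0) -> (N <= M)%nat -> sum_f_R0 f M = sum_f_R0 f N.
Proof.
  intros Hf HM; induction HM as [|M HM IH]; auto.
  simpl; rewrite IH, (Hf (S M)) by lia; ring.
Qed.

(* [RN_sum F x] is [sum_k F k (x k)], meaningful when [F k 0 = 0]. *)
Definition RN_sum (F : nat -> R -> R) (x : RN) : R :=
  sum_f_R0 (fun k => F k (RNv x k)) (supp_bound x).

Lemma RN_sum_bound F x N : (forall k, F k 0 = 0) ->
  (forall n, (N <= n)%nat -> RNv x n = 0) ->
  RN_sum F x = sum_f_R0 (fun k => F k (RNv x k)) N.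
Proof.
  intros F0 HN; unfold RN_sum.
  transitivity (sum_f_R0 (fun k => F k (RNv x k)) (Nat.max N (supp_bound x))).
  - symmetry; apply sum_f_R0_eventually_zero; [|lia].
    intros n Hn; rewrite supp_bound_spec by lia; apply F0.
  - apply sum_f_R0_eventually_zero; [|lia].
    intros n Hn; rewrite HN by lia; apply F0.
Qed.

Lemma RN_sum_common_bound F x y : (forall k, F k 0 = 0) ->
  exists N, RN_sum F x = sum_f_R0 (fun k => F k (RNv x k)) N /\
            RN_sum F y = sum_f_R0 (fun k => F k (RNv y k)) N /\
            RN_sum F (RN_add x y) = sum_f_R0 (fun k => F k (RNv x k + RNv y k)) N.
Proof.
  intros F0; set (N := Nat.max (supp_bound x) (supp_bound y)).
  exists N; split; [|split]; apply RN_sum_bound; auto;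
    intros n Hn; simpl; rewrite ?supp_bound_spec by lia; auto; ring.
Qed.

(** * Weighted l^1 seminorms *)

Definition wnorm (w : nat -> R) : RN -> R := RN_sum (fun k r => w k * Rabs r).
Definition lin (a : nat -> R) : RN -> R := RN_sum (fun k r => a k * r).

Definition null_weights (w : nat -> R) : Prop := (forall k, 0 <= w k) /\ Un_cv w 0.

Lemma wnorm_bound w x N : (forall n, (N <= n)%nat -> RNv x n = 0) ->
  wnorm w x = sum_f_R0 (fun k => w k * Rabs (RNv x k)) N.
Proof. apply RN_sum_bound; intros; rewrite Rabs_R0; ring. Qed.

Lemma wnorm_nonneg w x : (forall k, 0 <= w k) -> 0 <= wnorm w x.
Proof.
  intros Hw; apply cond_pos_sum; intros k; apply Rmult_le_pos; [apply Hw | apply Rabs_pos].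
Qed.

Lemma wnorm_add w x y : (forall k, 0 <= w k) -> wnorm w (RN_add x y) <= wnorm w x + wnorm w y.
Proof.
  intros Hw; unfold wnorm.
  destruct (RN_sum_common_bound (fun k r => w k * Rabs r) x y) as [N [Ex [Ey Exy]]];
    [intros; rewrite Rabs_R0; ring|].
  rewrite Ex, Ey, Exy, <- sum_plus; apply sum_Rle; intros k _.
  pose proof (Rabs_triang (RNv x k) (RNv y k)); pose proof (Hw k); nra.
Qed.

Lemma wnorm_disjoint w x y : (forall n, RNv x n = 0 \/ RNv y n = 0) ->
  wnorm w (RN_add x y) = wnorm w x + wnorm w y.
Proof.
  intros D; unfold wnorm.
  destruct (RN_sum_common_bound (fun k r => w k * Rabs r) x y) as [N [Ex [Ey Exy]]];
    [intros; rewrite Rabs_R0; ring|].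
  rewrite Ex, Ey, Exy, <- sum_plus; apply sum_eq; intros k _.
  destruct (D k) as [E|E]; rewrite E, ?Rplus_0_l, ?Rplus_0_r, Rabs_R0; ring.
Qed.

Lemma wnorm_scal w t x : wnorm w (RN_scal t x) = Rabs t * wnorm w x.
Proof.
  rewrite (wnorm_bound w _ (supp_bound x)), (wnorm_bound w x (supp_bound x)), scal_sum.
  - apply sum_eq; intros; simpl; rewrite Rabs_mult; ring.
  - apply supp_bound_spec.
  - intros n Hn; simpl; rewrite supp_bound_spec by auto; ring.
Qed.

Lemma wnorm_opp w x : wnorm w (RN_opp x) = wnorm w x.
Proof.
  replace (RN_opp x) with (RN_scal (Ropp 1) x) by RN_eq.
  rewrite wnorm_scal, Rabs_Ropp, Rabs_R1; ring.
Qed.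

Lemma wnorm_zero w : wnorm w RN_zero = 0.
Proof. rewrite (wnorm_bound w _ 0) by reflexivity; simpl; rewrite Rabs_R0; ring. Qed.

Lemma RN_unit_val k n : RNv (RN_unit k) n = if Nat.eqb n k then 1 else 0.
Proof. reflexivity. Qed.

Lemma sum_f_R0_single (c : R) k N : (k <= N)%nat ->
  sum_f_R0 (fun n => if Nat.eqb n k then c else 0) N = c.
Proof.
  induction N as [|N IH]; intros Hk.
  - replace k with 0%nat by lia; reflexivity.
  - rewrite tech5; cbv beta.
    destruct (Nat.eqb_spec (S N) k) as [<-|Ne].
    + rewrite sum_eq_R0; [ring|].
      intros n Hn; destruct (Nat.eqb_spec n (S N)); [lia|reflexivity].
    + rewrite IH by lia; ring.
Qed.

Lemma wnorm_unit w k : wnorm w (RN_unit k) = w k.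
Proof.
  rewrite (wnorm_bound w _ (S k)).
  - rewrite <- (sum_f_R0_single (w k) k (S k)) by lia.
    apply sum_eq; intros n _; rewrite RN_unit_val.
    destruct (Nat.eqb_spec n k); subst; rewrite ?Rabs_R1, ?Rabs_R0; ring.
  - intros n Hn; simpl; destruct (Nat.eqb_spec n k); [lia|reflexivity].
Qed.

Lemma lin_add a x y : lin a (RN_add x y) = lin a x + lin a y.
Proof.
  unfold lin.
  destruct (RN_sum_common_bound (fun k r => a k * r) x y) as [N [Ex [Ey Exy]]]; [intros; ring|].
  rewrite Ex, Ey, Exy, <- sum_plus; apply sum_eq; intros; ring.
Qed.

Lemma lin_bound a w x : (forall k, Rabs (a k) <= w k) -> Rabs (lin a x) <= wnorm w x.
Proof.
  intros Ha; eapply Rle_trans; [apply Rsum_abs|].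
  apply sum_Rle; intros k _; rewrite Rabs_mult.
  apply Rmult_le_compat_r; [apply Rabs_pos | apply Ha].
Qed.

Definition wball (w : nat -> R) (x : RN) (r : R) (y : RN) : Prop := wnorm w (RN_sub y x) < r.

Definition wopen (w : nat -> R) (U : RN -> Prop) : Prop :=
  forall x, U x -> exists r, 0 < r /\ forall y, wball w x r y -> U y.

Lemma RN_sub_0_r x : RN_sub x RN_zero = x.
Proof. unfold RN_sub; RN_eq. Qed.

Section WeightedTopology.
Variable w : nat -> R.
Hypothesis Hw : forall k, 0 <= w k.

Lemma wnorm_sub_triangle x y z :
  wnorm w (RN_sub y x) <= wnorm w (RN_sub y z) + wnorm w (RN_sub z x).
Proof.
  replace (RN_sub y x) with (RN_add (RN_sub y z) (RN_sub z x)) by (unfold RN_sub; RN_eq).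
  apply wnorm_add, Hw.
Qed.

Lemma wball_open x r : wopen w (wball w x r).
Proof.
  intros z Hz; exists (r - wnorm w (RN_sub z x)); split; [unfold wball in Hz; lra|].
  intros y Hy; unfold wball in *; pose proof (wnorm_sub_triangle x y z); lra.
Qed.

Lemma wball_center x r : 0 < r -> wball w x r x.
Proof.
  intros Hr; unfold wball; replace (RN_sub x x) with RN_zero by (unfold RN_sub; RN_eq).
  rewrite wnorm_zero; exact Hr.
Qed.

Lemma wopen_topology : is_topology (wopen w).
Proof.
  split; [|split].
  - intros x _; exists 1; split; [lra | auto].
  - intros F HF x [U [FU Ux]]; destruct (HF U FU x Ux) as [r [Hr Hb]].
    exists r; split; auto; intros y Hy; exists U; auto.
  - intros U V HU HV x [Ux Vx].
    destruct (HU x Ux) as [r1 [Hr1 H1]], (HV x Vx) as [r2 [Hr2 H2]].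
    exists (Rmin r1 r2); split; [apply Rmin_pos; auto|].
    intros y Hy; unfold wball in Hy; pose proof (Rmin_l r1 r2); pose proof (Rmin_r r1 r2).
    split; [apply H1 | apply H2]; unfold wball; lra.
Qed.

Lemma wopen_add_continuous : cont2 (wopen w) RN_add.
Proof.
  intros x y W HW Wxy; destruct (HW _ Wxy) as [r [Hr Hb]].
  exists (wball w x (r / 2)), (wball w y (r / 2)).
  repeat split; try apply wball_open; try (apply wball_center; lra).
  intros x' y' Hx Hy; apply Hb; unfold wball in *.
  replace (RN_sub (RN_add x' y') (RN_add x y)) with (RN_add (RN_sub x' x) (RN_sub y' y))
    by (unfold RN_sub; RN_eq).
  pose proof (wnorm_add w (RN_sub x' x) (RN_sub y' y) Hw); lra.
Qed.

Lemma wopen_scal_continuous t x W : wopen w W -> W (RN_scal t x) ->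
  exists d U, 0 < d /\ wopen w U /\ U x /\
    forall t' x', Rabs (t' - t) < d -> U x' -> W (RN_scal t' x').
Proof.
  intros HW Wtx; destruct (HW _ Wtx) as [e [He Hb]].
  set (q := wnorm w x); assert (Hq : 0 <= q) by apply wnorm_nonneg, Hw.
  pose proof (Rabs_pos t) as Ht0.
  set (r := e / (2 * (Rabs t + 1))); set (d := e / (2 * (q + r + 1))).
  assert (Hr : 0 < r /\ r * (Rabs t + 1) = e / 2) by (split; unfold r; [apply Rdiv_lt_0_compat|field]; lra).
  assert (Hd : 0 < d /\ d * (q + r + 1) = e / 2) by (split; unfold d; [apply Rdiv_lt_0_compat|field]; lra).
  exists d, (wball w x r); repeat split; try apply wball_open; try apply wball_center; try lra.
  intros t' x' Htt Hx; apply Hb; unfold wball in *.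
  replace (RN_sub (RN_scal t' x') (RN_scal t x))
    with (RN_add (RN_scal (t' - t) x') (RN_scal t (RN_sub x' x))) by (unfold RN_sub; RN_eq).
  eapply Rle_lt_trans; [apply wnorm_add, Hw|]; rewrite !wnorm_scal.
  assert (Hx' : wnorm w x' <= q + r).
  { replace x' with (RN_add (RN_sub x' x) x) at 1 by (unfold RN_sub; RN_eq).
    pose proof (wnorm_add w (RN_sub x' x) x Hw); unfold q; lra. }
  pose proof (wnorm_nonneg w x' Hw); pose proof (wnorm_nonneg w (RN_sub x' x) Hw).
  pose proof (Rabs_pos (t' - t)).
  assert (Rabs (t' - t) * wnorm w x' <= d * (q + r)) by (apply Rmult_le_compat; lra).
  assert (Rabs t * wnorm w (RN_sub x' x) <= Rabs t * r) by (apply Rmult_le_compat_l; lra).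
  nra.
Qed.

Lemma wopen_convex_basis U : nbhd (wopen w) RN_zero U ->
  exists C, nbhd (wopen w) RN_zero C /\ convex_RN C /\ forall x, C x -> U x.
Proof.
  intros [O [HO [O0 OU]]]; destruct (HO _ O0) as [e [He Hb]].
  exists (wball w RN_zero e); split; [exists (wball w RN_zero e); split; [apply wball_open|]|split].
  - split; [apply wball_center; auto | auto].
  - intros x y t Hx Hy Ht; unfold wball in *; rewrite RN_sub_0_r in *.
    eapply Rle_lt_trans; [apply wnorm_add, Hw|]; rewrite !wnorm_scal.
    rewrite (Rabs_right t), (Rabs_right (1 - t)) by lra.
    destruct Ht as [Ht0 Ht1]; destruct (Rle_lt_or_eq_dec 0 t Ht0) as [Tp|<-]; [nra|lra].
  - intros x Hx; apply OU, Hb, Hx.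
Qed.
End WeightedTopology.

Lemma wopen_lc w : null_weights w -> is_lc_vector_topology_en0 (wopen w).
Proof.
  intros [Hw Hw0]; split; [|split; [|split; [|split]]].
  - exact (wopen_topology w).
  - exact (wopen_add_continuous w Hw).
  - exact (wopen_scal_continuous w Hw).
  - exact (wopen_convex_basis w Hw).
  - intros U [O [HO [O0 OU]]]; destruct (HO _ O0) as [e [He Hb]].
    destruct (Hw0 e He) as [N HN]; exists N; intros n Hn; apply OU, Hb.
    unfold wball; rewrite RN_sub_0_r, wnorm_unit.
    specialize (HN n Hn); unfold Rdist in HN; rewrite Rminus_0_r, Rabs_right in HN; auto.
    apply Rle_ge, Hw.
Qed.

Lemma lc_nu_open tau U : is_lc_vector_topology_en0 tau -> tau U -> nu_open U.
Proof.
  intros Ht HU x Ux; exists ((tau, U) :: nil); split.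
  - intros p [<-|[]]; simpl; auto.
  - intros y Hy; apply (Hy (tau, U)); simpl; auto.
Qed.

Lemma wopen_nu_open w U : null_weights w -> wopen w U -> nu_open U.
Proof. intros Hw; apply lc_nu_open, wopen_lc, Hw. Qed.

(** * Neighbourhoods of [nu] *)

Definition sgn (r : R) : R := if Rle_dec 0 r then 1 else -1.

Lemma Rabs_mul_sgn r : Rabs r * sgn r = r.
Proof.
  unfold sgn; destruct (Rle_dec 0 r); [rewrite Rabs_right | rewrite Rabs_left]; lra.
Qed.

Lemma Rabs_sgn r : Rabs (sgn r) = 1.
Proof.
  unfold sgn; destruct (Rle_dec 0 r); [apply Rabs_R1 | rewrite Rabs_left; lra].
Qed.

Lemma sgn_mul_self r : sgn r * r = Rabs r.
Proof. unfold sgn; destruct (Rle_dec 0 r); [rewrite Rabs_right | rewrite Rabs_left]; lra. Qed.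

Definition on_axis (C : RN -> Prop) (k : nat) (t : R) : Prop :=
  C (RN_scal t (RN_unit k)) /\ C (RN_scal (- t) (RN_unit k)).

(* Induct on [x] along [RN_ind] for all rescalings [c x] at once: the last coordinate of
   [c x] is a multiple [a] of a point [± e_k / w k] of [C], the rest is [(1 - a) C]. *)
Lemma convex_contains_wball (C : RN -> Prop) (w : nat -> R) :
  convex_RN C -> C RN_zero -> (forall k, 0 < w k) ->
  (forall k, on_axis C k (/ w k)) -> forall z, wnorm w z < 1 -> C z.
Proof.
  intros Cconv C0 Hw Haxis.
  assert (Hw' : forall k, 0 <= w k) by (intros k; apply Rlt_le, Hw).
  assert (Gen : forall x c, wnorm w (RN_scal c x) < 1 -> C (RN_scal c x)).
  { apply (RN_ind (fun x => forall c, wnorm w (RN_scal c x) < 1 -> C (RN_scal c x))).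
    { intros c _; replace (RN_scal c RN_zero) with RN_zero by RN_eq; exact C0. }
    intros x k t Hx IH c Hc.
    set (a := w k * Rabs (c * t)).
    assert (Ha : 0 <= a) by (apply Rmult_le_pos; [apply Hw' | apply Rabs_pos]).
    assert (Split : RN_scal c (RN_add x (RN_scal t (RN_unit k)))
                    = RN_add (RN_scal c x) (RN_scal (c * t) (RN_unit k))) by RN_eq.
    assert (Hsum : Rabs c * wnorm w x + a < 1).
    { rewrite Split, wnorm_disjoint, wnorm_scal, wnorm_scal, wnorm_unit in Hc.
      - unfold a; lra.
      - intros n; simpl; destruct (Nat.eqb_spec n k) as [->|]; [left; rewrite Hx by lia|right]; ring. }
    pose proof (Rmult_le_pos _ _ (Rabs_pos c) (wnorm_nonneg w x Hw')) as Hcx.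
    assert (Cy : C (RN_scal (sgn (c * t) * / w k) (RN_unit k))).
    { destruct (Haxis k) as [Cp Cn]; unfold sgn; destruct (Rle_dec 0 (c * t)).
      - rewrite Rmult_1_l; exact Cp.
      - replace (-1 * / w k) with (- / w k) by ring; exact Cn. }
    assert (Cx : C (RN_scal (c / (1 - a)) x)).
    { apply IH; unfold Rdiv; rewrite wnorm_scal, Rabs_mult, Rabs_inv, (Rabs_right (1 - a)) by lra.
      apply (Rmult_lt_reg_r (1 - a)); [lra|].
      replace (Rabs c * / (1 - a) * wnorm w x * (1 - a)) with (Rabs c * wnorm w x) by (field; lra).
      lra. }
    assert (Hwk : w k <> 0) by apply Rgt_not_eq, Hw.
    assert (Ha1 : 1 - a <> 0) by lra.
    replace (RN_scal c (RN_add x (RN_scal t (RN_unit k))))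
      with (RN_add (RN_scal (1 - a) (RN_scal (c / (1 - a)) x))
                   (RN_scal (1 - (1 - a)) (RN_scal (sgn (c * t) * / w k) (RN_unit k)))).
    - apply Cconv; auto; lra.
    - apply RN_ext; intros n; simpl; destruct (Nat.eqb_spec n k) as [->|].
      + rewrite Hx by lia.
        transitivity (a * (sgn (c * t) * / w k)); [field; tauto|].
        replace (a * (sgn (c * t) * / w k)) with (Rabs (c * t) * sgn (c * t))
          by (unfold a; field; exact Hwk).
        rewrite Rabs_mul_sgn; ring.
      + field; tauto. }
  intros z Hz; replace z with (RN_scal 1 z) by RN_eq; apply Gen; rewrite wnorm_scal, Rabs_R1; lra.
Qed.

Fixpoint last_true (P : nat -> bool) (j : nat) : nat :=
  match j with O => O | S j' => if P (S j') then S j' else last_true P j' end.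

Lemma last_true_spec P j : last_true P j = O \/ P (last_true P j) = true.
Proof.
  induction j as [|j IH]; simpl; auto.
  destruct (P (S j)) eqn:E; auto.
Qed.

Lemma last_true_ge P j M : (1 <= M)%nat -> (M <= j)%nat -> P M = true -> (M <= last_true P j)%nat.
Proof.
  induction j as [|j IH]; simpl; intros H1 Hj HP; [lia|].
  destruct (P (S j)) eqn:E; [lia|].
  destruct (Nat.eq_dec M (S j)) as [->|]; [congruence | apply IH; auto; lia].
Qed.

(* A diagonal argument: [lam k] is the largest integer [M <= k] already admissible at
   index [k] (or the fallback [d k]), so it tends to infinity. *)
Lemma diagonal_weights (Q : nat -> R -> Prop) :
  (forall k, exists d, 0 < d /\ Q k d) ->
  (forall M : nat, exists N, forall n, (N <= n)%nat -> Q n (INR M)) ->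
  exists lam, (forall k, 0 < lam k /\ Q k (lam k)) /\ Un_cv (fun k => / lam k) 0.
Proof.
  intros Hd HM.
  destruct (choice _ Hd) as [d Hd'], (choice _ HM) as [Nf HNf].
  set (m := fun k => last_true (fun M => Nat.leb (Nf M) k) k).
  exists (fun k => if Nat.eqb (m k) 0 then d k else INR (m k)); split.
  - intros k; destruct (Nat.eqb_spec (m k) 0) as [|Hm]; [apply Hd'|].
    destruct (last_true_spec (fun M => Nat.leb (Nf M) k) k) as [E|E]; [contradiction|].
    apply Nat.leb_le in E; split; [apply lt_0_INR; lia | apply HNf, E].
  - intros e He; destruct (INR_unbounded (/ e)) as [M HMe].
    exists (Nat.max (Nf (S M)) (S M)); intros n Hn.
    assert (Hb : (S M <= m n)%nat) by (apply last_true_ge; [lia | lia | apply Nat.leb_le; lia]).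
    destruct (Nat.eqb_spec (m n) 0) as [|_]; [lia|].
    pose proof (le_INR _ _ Hb) as Hl; rewrite S_INR in Hl.
    pose proof (Rinv_0_lt_compat _ He); pose proof (pos_INR M).
    unfold Rdist; rewrite Rminus_0_r, Rabs_right by (apply Rle_ge, Rlt_le, Rinv_0_lt_compat; lra).
    replace e with (/ / e) by (field; lra).
    apply Rinv_lt_contravar; [apply Rmult_lt_0_compat|]; lra.
Qed.

Section LocallyConvex.
Variable tau : (RN -> Prop) -> Prop.
Hypothesis Htau : is_lc_vector_topology_en0 tau.

Lemma scal_continuous_at_zero t x O : tau O -> O (RN_scal t x) ->
  exists U, tau U /\ U x /\ forall x', U x' -> O (RN_scal t x').
Proof.
  intros HO Otx; destruct Htau as [_ [_ [Hsc _]]].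
  destruct (Hsc t x O HO Otx) as [d [U [Hd [HU [Ux HUO]]]]].
  exists U; repeat split; auto; intros x' Ux'; apply HUO; auto.
  unfold Rminus; rewrite Rplus_opp_r, Rabs_R0; exact Hd.
Qed.

Lemma lc_axis_small (C : RN -> Prop) : nbhd tau RN_zero C ->
  forall k, exists d, 0 < d /\ on_axis C k d.
Proof.
  intros [O [HO [O0 OC]]] k; destruct Htau as [_ [_ [Hsc _]]].
  destruct (Hsc 0 (RN_unit k) O HO) as [d [U [Hd [HU [Uk HU']]]]].
  { replace (RN_scal 0 (RN_unit k)) with RN_zero by RN_eq; exact O0. }
  exists (d / 2); split; [lra|]; split; apply OC, HU'; auto; rewrite Rminus_0_r;
    [rewrite Rabs_right | rewrite Rabs_left]; lra.
Qed.

Lemma lc_axis_large (C : RN -> Prop) : nbhd tau RN_zero C ->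
  forall M, exists N, forall n, (N <= n)%nat -> on_axis C n M.
Proof.
  intros [O [HO [O0 OC]]] M; destruct Htau as [Htop [_ [_ [_ Hen]]]].
  assert (Z : forall t, O (RN_scal t RN_zero))
    by (intros t; replace (RN_scal t RN_zero) with RN_zero by RN_eq; exact O0).
  destruct (scal_continuous_at_zero M RN_zero O HO (Z M)) as [U1 [HU1 [U10 P1]]].
  destruct (scal_continuous_at_zero (- M) RN_zero O HO (Z (- M))) as [U2 [HU2 [U20 P2]]].
  destruct (Hen (fun x => U1 x /\ U2 x)) as [N HN].
  { exists (fun x => U1 x /\ U2 x); split; [apply Htop; auto | split; auto]. }
  exists N; intros n Hn; destruct (HN n Hn); split; apply OC; [apply P1 | apply P2]; auto.
Qed.

Lemma lc_weights V : tau V -> V RN_zero ->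
  exists w, null_weights w /\ forall z, wnorm w z < 1 -> V z.
Proof.
  intros HV V0; destruct Htau as [_ [_ [_ [Hlc _]]]].
  destruct (Hlc V) as [C [HC [Cconv CV]]]; [exists V; auto|].
  destruct (diagonal_weights (on_axis C) (lc_axis_small C HC) (fun M => lc_axis_large C HC (INR M)))
    as [lam [Hlam Hlam0]].
  exists (fun k => / lam k); split; [split; auto|].
  - intros k; apply Rlt_le, Rinv_0_lt_compat, Hlam.
  - intros z Hz; apply CV; apply (convex_contains_wball C (fun k => / lam k)); auto.
    + destruct HC as [O [_ [O0 OC]]]; apply OC, O0.
    + intros k; apply Rinv_0_lt_compat, Hlam.
    + intros k; rewrite Rinv_inv; apply Hlam.
Qed.

Lemma lc_weights_at O x : tau O -> O x ->
  exists w, null_weights w /\ forall z, wnorm w (RN_sub z x) < 1 -> O z.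
Proof.
  intros HO Ox; destruct Htau as [_ [Hadd _]].
  destruct (Hadd x RN_zero O HO) as [U [V [HU [HV [Ux [V0 HUV]]]]]].
  { replace (RN_add x RN_zero) with x by RN_eq; exact Ox. }
  destruct (lc_weights V HV V0) as [w [Hw HwV]].
  exists w; split; auto; intros z Hz.
  replace z with (RN_add x (RN_sub z x)) by (unfold RN_sub; RN_eq); apply HUV; auto.
Qed.
End LocallyConvex.

Lemma wnorm_weights_add w1 w2 x : wnorm (fun k => w1 k + w2 k) x = wnorm w1 x + wnorm w2 x.
Proof. unfold wnorm, RN_sum; rewrite <- sum_plus; apply sum_eq; intros; ring. Qed.

Lemma null_weights_add w1 w2 : null_weights w1 -> null_weights w2 ->
  null_weights (fun k => w1 k + w2 k).
Proof.
  intros [P1 C1] [P2 C2]; split.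
  - intros k; specialize (P1 k); specialize (P2 k); lra.
  - rewrite <- (Rplus_0_r 0); apply CV_plus; auto.
Qed.

Lemma nu_weights_lt A x : nu_open A -> A x ->
  exists w, null_weights w /\ forall z, wnorm w (RN_sub z x) < 1 -> A z.
Proof.
  intros HA Ax; destruct (HA x Ax) as [l [Hl HlA]].
  cut (exists w, null_weights w /\
         forall z, wnorm w (RN_sub z x) < 1 -> forall p, In p l -> snd p z).
  { intros [w [Hw P]]; exists w; split; auto. }
  clear HlA; induction l as [|p l IH].
  - exists (fun _ => 0); split; [split|].
    + intros k; lra.
    + intros e He; exists O; intros; unfold Rdist; rewrite Rminus_0_r, Rabs_R0; exact He.
    + intros z _ p [].
  - destruct IH as [w1 [H1 P1]]; [intros; apply Hl; simpl; auto|].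
    destruct (Hl p (or_introl eq_refl)) as [Hp1 [Hp2 Hp3]].
    destruct (lc_weights_at _ Hp1 _ _ Hp2 Hp3) as [w2 [H2 P2]].
    exists (fun k => w1 k + w2 k); split; [apply null_weights_add; auto|].
    intros z Hz q Hq; rewrite wnorm_weights_add in Hz.
    pose proof (wnorm_nonneg w1 (RN_sub z x) (proj1 H1)).
    pose proof (wnorm_nonneg w2 (RN_sub z x) (proj1 H2)).
    destruct Hq as [<-|Hq]; [apply P2 | apply P1]; auto; lra.
Qed.

Lemma nu_weights A x : nu_open A -> A x ->
  exists w, null_weights w /\ forall z, wnorm w (RN_sub z x) <= 1 -> A z.
Proof.
  intros HA Ax; destruct (nu_weights_lt A x HA Ax) as [w [Hw P]].
  exists (fun k => w k + w k); split; [apply null_weights_add; auto|].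
  intros z Hz; apply P; rewrite wnorm_weights_add in Hz.
  pose proof (wnorm_nonneg w (RN_sub z x) (proj1 Hw)); lra.
Qed.

(** * Characters and quasi-convex sets *)

Definition continuous_map {X Y : Type} (tauX : (X -> Prop) -> Prop) (tauY : (Y -> Prop) -> Prop)
  (f : X -> Y) : Prop :=
  forall x W, tauY W -> W (f x) -> exists O, tauX O /\ O x /\ forall y, O y -> W (f y).

Lemma character_mono {G} (add : G -> G -> G) (tau1 tau2 : (G -> Prop) -> Prop) chi :
  (forall U, tau1 U -> tau2 U) -> is_character add tau1 chi -> is_character add tau2 chi.
Proof.
  intros Hm [C1 [C2 C3]]; split; [|split]; auto.
  intros x e He; destruct (C3 x e He) as [O [HO P]]; exists O; auto.
Qed.

Lemma character_comp {G G'} (add : G -> G -> G) (add' : G' -> G' -> G')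
  (tau : (G -> Prop) -> Prop) (tau' : (G' -> Prop) -> Prop) f chi :
  (forall x y, f (add x y) = add' (f x) (f y)) -> continuous_map tau tau' f ->
  is_character add' tau' chi -> is_character add tau (fun x => chi (f x)).
Proof.
  intros Hf Cf [C1 [C2 C3]]; split; [|split]; auto.
  - intros x y; rewrite Hf; apply C2.
  - intros x e He; destruct (C3 (f x) e He) as [O' [HO' [O'x P']]].
    destruct (Cf x O' HO' O'x) as [O [HO [Ox P]]]; exists O; auto.
Qed.

Lemma quasi_convex_mono {G} (add : G -> G -> G) (tau1 tau2 : (G -> Prop) -> Prop) A :
  (forall U, tau1 U -> tau2 U) -> quasi_convex add tau1 A -> quasi_convex add tau2 A.
Proof.
  intros Hm HA g Hg; destruct (HA g Hg) as [chi [Hc P]]; exists chi; split; auto.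
  apply (character_mono _ tau1); auto.
Qed.

Lemma quasi_convex_inter {G} (add : G -> G -> G) tau (A B : G -> Prop) :
  quasi_convex add tau A -> quasi_convex add tau B -> quasi_convex add tau (fun g => A g /\ B g).
Proof.
  intros HA HB g Hg; destruct (classic (A g)) as [Ag|Ag].
  - destruct (HB g (fun Bg => Hg (conj Ag Bg))) as [chi [Hc [P1 P2]]].
    exists chi; split; [exact Hc | split; [intros a [_ Ba]; auto | exact P2]].
  - destruct (HA g Ag) as [chi [Hc [P1 P2]]].
    exists chi; split; [exact Hc | split; [intros a [Aa _]; auto | exact P2]].
Qed.

Lemma quasi_convex_forall {G I} (add : G -> G -> G) tau (A : I -> G -> Prop) :
  (forall i, quasi_convex add tau (A i)) -> quasi_convex add tau (fun g => forall i, A i g).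
Proof.
  intros HA g Hg; destruct (not_all_ex_not _ _ Hg) as [i Hi].
  destruct (HA i g Hi) as [chi [Hc [P1 P2]]]; exists chi; split; [exact Hc | split; auto].
Qed.

Lemma quasi_convex_preimage {G G'} (add : G -> G -> G) (add' : G' -> G' -> G')
  (tau : (G -> Prop) -> Prop) (tau' : (G' -> Prop) -> Prop) f A :
  (forall x y, f (add x y) = add' (f x) (f y)) -> continuous_map tau tau' f ->
  quasi_convex add' tau' A -> quasi_convex add tau (fun x => A (f x)).
Proof.
  intros Hf Cf HA g Hg; destruct (HA (f g) Hg) as [chi [Hc [P1 P2]]].
  exists (fun x => chi (f x)); split; [apply (character_comp _ add' _ tau'); auto | split; auto].
Qed.

Definition cis (a : R) : R * R := (cos a, sin a).

Lemma on_circle_cis a : on_circle (cis a).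
Proof. unfold on_circle, cis; simpl; pose proof (sin2_cos2 a) as E; unfold Rsqr in E; nra. Qed.

Lemma cmul_cis a b : cmul (cis a) (cis b) = cis (a + b).
Proof. unfold cmul, cis; simpl; rewrite cos_plus, sin_plus; f_equal; ring. Qed.

Lemma cis_0 : cis 0 = (1, 0).
Proof. unfold cis; rewrite cos_0, sin_0; reflexivity. Qed.

Lemma Rabs_sin_le u : Rabs (sin u) <= Rabs u.
Proof.
  assert (P : forall v, 0 < v -> Rabs (sin v) <= v).
  { intros v Hv; pose proof (sin_lt_x v Hv); pose proof (SIN_bound v); pose proof PI2_1.
    destruct (Rle_dec 1 v); [unfold Rabs; destruct (Rcase_abs (sin v)); lra|].
    assert (0 < sin v) by (apply sin_gt_0; lra); rewrite Rabs_right; lra. }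
  destruct (Rtotal_order u 0) as [Hu|[->|Hu]].
  - rewrite <- (Ropp_involutive u), sin_neg, !Rabs_Ropp, (Rabs_left u) by lra; apply P; lra.
  - rewrite sin_0; lra.
  - rewrite (Rabs_right u) by lra; apply P, Hu.
Qed.

(* The chord [|e^{ia} - e^{ib}| = 2 |sin ((a - b) / 2)|] is at most the arc [|a - b|]. *)
Lemma cis_dist a b :
  (fst (cis a) - fst (cis b)) ^ 2 + (snd (cis a) - snd (cis b)) ^ 2 <= (a - b) ^ 2.
Proof.
  unfold cis; simpl; pose proof (sin2_cos2 a); pose proof (sin2_cos2 b); unfold Rsqr in *.
  assert (E : (cos a - cos b) * ((cos a - cos b) * 1) + (sin a - sin b) * ((sin a - sin b) * 1)
              = 2 - 2 * cos (a - b)) by (rewrite cos_minus; nra).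
  rewrite E; replace (a - b) with (2 * ((a - b) / 2)) at 1 by field; rewrite cos_2a_sin.
  assert (HS : Rsqr (sin ((a - b) / 2)) <= Rsqr ((a - b) / 2))
    by apply Rsqr_le_abs_1, Rabs_sin_le.
  unfold Rsqr in HS; nra.
Qed.

Definition sector_arg (p : R * R) : R := atan (snd p / fst p).

Lemma sector_arg_spec p : on_circle p -> Rabs (snd p) < fst p ->
  cis (sector_arg p) = p /\ Rabs (sector_arg p) < PI / 4.
Proof.
  destruct p as [f s]; unfold on_circle, cis, sector_arg; simpl; intros Hc Hl.
  assert (Hf : 0 < f) by (pose proof (Rabs_pos s); lra).
  set (u := s / f).
  assert (E : 1 + u² = / f * / f) by (unfold u, Rsqr; field_simplify_eq; [nra | lra]).
  assert (Sq : sqrt (1 + u²) = / f)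
    by (rewrite E; apply sqrt_square, Rlt_le, Rinv_0_lt_compat, Hf).
  split.
  - rewrite cos_atan, sin_atan, Sq; f_equal; unfold u; field; lra.
  - assert (Hu : -1 < u < 1).
    { unfold u; destruct (Rabs_def2 _ _ Hl).
      split; apply (Rmult_lt_reg_r f); auto; unfold Rdiv; rewrite Rmult_assoc, Rinv_l; lra. }
    pose proof (atan_increasing u 1 ltac:(lra)); pose proof (atan_increasing (-1) u ltac:(lra)).
    replace (-1) with (- (1)) in * by ring; rewrite atan_opp, atan_1 in *.
    apply Rabs_def1; lra.
Qed.

Lemma cis_inj_local a b : cis a = cis b -> Rabs (a - b) < PI -> a = b.
Proof.
  unfold cis; intros E Hab; injection E; intros Es Ec.
  assert (S0 : sin (a - b) = 0) by (rewrite sin_minus, Ec, Es; ring).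
  destruct (Rtotal_order (a - b) 0) as [L|[L|L]].
  - rewrite Rabs_left in Hab by lra; assert (sin (a - b) < 0) by (apply sin_lt_0_var; lra); lra.
  - lra.
  - rewrite Rabs_right in Hab by lra; assert (0 < sin (a - b)) by (apply sin_gt_0; lra); lra.
Qed.

Lemma circle_idempotent p : on_circle p -> cmul p p = p -> p = (1, 0).
Proof.
  destruct p as [p q]; unfold cmul, on_circle; simpl; intros Hc E.
  injection E; intros E2 E1.
  assert (q = 0).
  { destruct (Req_dec q 0) as [|Hq]; auto.
    assert (p = 1 / 2) by (apply (Rmult_eq_reg_l q); auto; field_simplify; lra); nra. }
  subst q; f_equal; nra.
Qed.

Lemma near_one_sector p : (fst p - 1) ^ 2 + (snd p - 0) ^ 2 < (1 / 2) ^ 2 ->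
  Rabs (snd p) < fst p.
Proof.
  destruct p as [f s]; cbn [fst snd]; intros Hp.
  pose proof (pow2_ge_0 (f - 1)); pose proof (pow2_ge_0 (s - 0)).
  assert (Q1 : (f - 1) * (f - 1) < 1 / 4) by nra; assert (Q2 : s * s < 1 / 4) by nra.
  assert (f > 1 / 2) by (destruct (Rle_dec f (1 / 2)); [nra | lra]).
  assert (s < 1 / 2) by (destruct (Rle_dec (1 / 2) s); [nra | lra]).
  assert (- (1 / 2) < s) by (destruct (Rle_dec s (- (1 / 2))); [nra | lra]).
  apply Rabs_def1; lra.
Qed.

Lemma lin_character F w K : null_weights w -> 0 < K ->
  (forall x y, F (RN_add x y) = F x + F y) -> (forall z, Rabs (F z) <= K * wnorm w z) ->
  is_character RN_add nu_open (fun x => cis (F x)).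
Proof.
  intros Hw HK Fadd Fb; split; [|split].
  - intros; apply on_circle_cis.
  - intros x y; rewrite Fadd; symmetry; apply cmul_cis.
  - intros x e He; exists (wball w x (e / K)); split; [|split].
    + apply (wopen_nu_open w); [exact Hw | apply wball_open, Hw].
    + apply wball_center, Rdiv_lt_0_compat; auto.
    + intros y Hy; eapply Rle_lt_trans; [apply cis_dist|].
      replace (F y - F x) with (F (RN_sub y x))
        by (apply (Rplus_eq_reg_r (F x)); rewrite <- Fadd;
            replace (RN_add (RN_sub y x) x) with y by (unfold RN_sub; RN_eq); ring).
      assert (HF : Rabs (F (RN_sub y x)) < e).
      { eapply Rle_lt_trans; [apply Fb|]; unfold wball in Hy.
        apply (Rmult_lt_compat_l K) in Hy; auto.
        replace (K * (e / K)) with e in Hy by (field; lra); exact Hy. }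
      rewrite <- (Rabs_right e) in HF by lra; apply Rsqr_lt_abs_1 in HF; unfold Rsqr in HF; nra.
Qed.

(* With [p = wnorm w g > 1] and [c = PI / (p + 1)], the character [cis (c lin (w sgn g))]
   keeps the ball within the angle [PI / 2] but sends [g] to the angle [c p] in [(PI / 2, PI)]. *)
Lemma wnorm_ball_quasi_convex w : null_weights w ->
  quasi_convex RN_add nu_open (fun x => wnorm w x <= 1).
Proof.
  intros Hw g Hg; set (p := wnorm w g); assert (Hp : 1 < p) by (apply Rnot_le_lt, Hg).
  set (a := fun k => w k * sgn (RNv g k)).
  assert (Ha : forall k, Rabs (a k) <= w k)
    by (intros k; unfold a; rewrite Rabs_mult, Rabs_sgn, Rabs_right; [lra | apply Rle_ge, Hw]).
  assert (Hag : lin a g = p).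
  { apply sum_eq; intros k _; unfold a; rewrite <- sgn_mul_self; ring. }
  set (c := PI / (p + 1)); pose proof PI_RGT_0.
  assert (Hc : 0 < c /\ c <= PI / 2 /\ PI / 2 < c * p < PI).
  { unfold c; split; [apply Rdiv_lt_0_compat; lra|].
    split; [apply Rmult_le_compat_l; [lra|]; apply Rinv_le_contravar; lra|].
    split; apply (Rmult_lt_reg_r (p + 1)); try lra; unfold Rdiv; field_simplify; nra. }
  exists (fun x => cis (c * lin a x)); split; [|split].
  - apply (lin_character _ w c); auto; [lra | intros; rewrite lin_add; ring|].
    intros z; rewrite Rabs_mult, Rabs_right by lra; apply Rmult_le_compat_l; [lra|].
    apply lin_bound, Ha.
  - intros x Hx; unfold in_Splus, cis; simpl; apply cos_ge_0;
      pose proof (lin_bound a w x Ha); pose proof (Rle_abs (lin a x));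
      pose proof (Rle_abs (- lin a x)); rewrite Rabs_Ropp in *; nra.
  - unfold in_Splus, cis; simpl; rewrite Hag; assert (cos (c * p) < 0) by (apply cos_lt_0; lra); lra.
Qed.

(** * Characters of R^(N) with values in a sector *)

Lemma le_inv_nat_zero e K : (forall n : nat, (1 <= n)%nat -> Rabs e <= K / INR n) -> e = 0.
Proof.
  intros He; destruct (Req_dec e 0) as [|Hne]; auto; exfalso.
  assert (Hp : 0 < Rabs e) by (apply Rabs_pos_lt, Hne).
  destruct (INR_unbounded (K / Rabs e)) as [N HN].
  specialize (He (S N) ltac:(lia)); rewrite S_INR in He; pose proof (pos_INR N).
  apply (Rmult_gt_compat_r (Rabs e)) in HN; auto.
  unfold Rdiv in *; rewrite Rmult_assoc, Rinv_l in HN by lra.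
  apply (Rmult_le_compat_r (INR N + 1)) in He; [|lra].
  rewrite Rmult_assoc, Rinv_l in He; nra.
Qed.

Lemma floor_nat u t : 0 < u -> 0 <= t -> exists m : nat, INR m * u <= t < (INR m + 1) * u.
Proof.
  intros Hu Ht; destruct (INR_unbounded (t / u)) as [N HN].
  assert (HN' : t < INR N * u).
  { apply (Rmult_gt_compat_r u) in HN; auto.
    unfold Rdiv in HN; rewrite Rmult_assoc, Rinv_l in HN; lra. }
  clear HN; induction N as [|N IH]; [simpl in HN'; lra|].
  rewrite S_INR in HN'; destruct (Rlt_dec t (INR N * u)); [apply IH; auto | exists N; lra].
Qed.

Definition locally_additive (g : R -> R) (D : R) : Prop :=
  forall s t, Rabs s < D -> Rabs t < D -> Rabs (s + t) < D -> g (s + t) = g s + g t.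

Section LocallyAdditive.
Variables (g : R -> R) (D : R).
Hypothesis Hadd : locally_additive g D.

Lemma locally_additive_nat_mul (j : nat) u : 0 <= u -> INR j * u < D -> g (INR j * u) = INR j * g u.
Proof.
  intros Hu; induction j as [|j IH]; intros Hj.
  - simpl INR in *; rewrite !Rmult_0_l in *.
    assert (E := Hadd 0 0); rewrite Rplus_0_r, Rabs_R0 in E; specialize (E Hj Hj Hj); lra.
  - rewrite S_INR in *; pose proof (pos_INR j).
    assert (0 <= INR j * u) by (apply Rmult_le_pos; lra).
    replace ((INR j + 1) * u) with (INR j * u + u) by ring.
    rewrite Hadd, IH by (try rewrite Rabs_right; nra); ring.
Qed.

Variable B : R.
Hypothesis Hbound : forall t, Rabs t < D -> Rabs (g t) <= B.

(* With [u = c / n], [t = m u + r], [0 <= r < u]: [g t = m g u + g r = g r], and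
   [n g r = g (n r)] is bounded by [B]. *)
Lemma locally_additive_vanish c : 0 < c < D -> g c = 0 -> forall t, Rabs t < D -> g t = 0.
Proof.
  intros Hc Hgc.
  assert (Hpos : forall t, 0 <= t < D -> g t = 0).
  { intros t Ht; apply (le_inv_nat_zero _ B); intros n Hn.
    assert (Hn1 : 1 <= INR n) by (apply (le_INR 1); auto).
    set (u := c / INR n); assert (Hnu : INR n * u = c) by (unfold u; field; lra).
    assert (Hu : 0 < u) by (unfold u; apply Rdiv_lt_0_compat; lra).
    assert (Hgu : g u = 0).
    { assert (E := locally_additive_nat_mul n u); rewrite Hnu, Hgc in E.
      specialize (E (Rlt_le _ _ Hu) (proj2 Hc)); nra. }
    destruct (floor_nat u t Hu (proj1 Ht)) as [m [Hm1 Hm2]]; pose proof (pos_INR m).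
    set (r := t - INR m * u); assert (Er : r = t - INR m * u) by reflexivity.
    assert (Hr : 0 <= r < u) by lra; assert (Huc : u <= c) by nra.
    assert (Hgt : g t = g r).
    { replace t with (INR m * u + r) at 1 by (unfold r; ring).
      rewrite Hadd, locally_additive_nat_mul, Hgu by (try rewrite Rabs_right; nra); ring. }
    assert (Hnr : g (INR n * r) = INR n * g r) by (apply locally_additive_nat_mul; nra).
    assert (HB : Rabs (g (INR n * r)) <= B) by (apply Hbound; rewrite Rabs_right; nra).
    rewrite Hgt; rewrite Hnr, Rabs_mult, Rabs_right in HB by lra.
    apply (Rmult_le_reg_l (INR n)); [lra|].
    unfold Rdiv; rewrite <- Rmult_assoc, (Rmult_comm (INR n) B), Rmult_assoc, Rinv_r by lra; lra. }
  intros t Ht; destruct (Rle_dec 0 t); [apply Hpos; rewrite Rabs_right in Ht; lra|].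
  assert (Hn : g (- t) = 0) by (apply Hpos; rewrite Rabs_left in Ht; lra).
  assert (E : g (t + - t) = g t + g (- t)).
  { apply Hadd; auto; [rewrite Rabs_Ropp; auto | rewrite Rplus_opp_r, Rabs_R0; lra]. }
  rewrite Rplus_opp_r, Hn in E.
  assert (E0 := Hadd 0 0); rewrite Rplus_0_r, Rabs_R0 in E0.
  assert (0 < D) by (pose proof (Rabs_pos t); lra); specialize (E0 H H H); lra.
Qed.
End LocallyAdditive.

Lemma locally_additive_linear g D B : 0 < D -> locally_additive g D ->
  (forall t, Rabs t < D -> Rabs (g t) <= B) ->
  forall t, Rabs t < D -> g t = t * (g (D / 2) / (D / 2)).
Proof.
  intros HD Hadd Hb; set (a := g (D / 2) / (D / 2)).
  assert (Hadd' : locally_additive (fun t => g t - t * a) D)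
    by (intros s u Hs Hu Hsu; rewrite Hadd by auto; ring).
  assert (Hb' : forall u, Rabs u < D -> Rabs (g u - u * a) <= B + D * Rabs a).
  { intros u Hu; eapply Rle_trans; [apply Rabs_triang|]; rewrite Rabs_Ropp, Rabs_mult.
    pose proof (Hb u Hu); pose proof (Rabs_pos a); nra. }
  intros t Ht; apply Rminus_diag_uniq.
  apply (locally_additive_vanish _ D Hadd' _ Hb' (D / 2)); auto; [lra|].
  unfold a; field; lra.
Qed.

(* Write [t = n s] with [s] small. *)
Lemma circle_hom_extend (phi : R -> R * R) a delta : 0 < delta ->
  (forall s t, phi (s + t) = cmul (phi s) (phi t)) ->
  (forall s, Rabs s < delta -> phi s = cis (a * s)) ->
  forall t, phi t = cis (a * t).
Proof.
  intros Hd Hphi Hloc t.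
  assert (Hpow : forall (n : nat) s, Rabs s < delta -> phi (INR n * s) = cis (a * (INR n * s))).
  { intros n s Hs; induction n as [|n IH].
    - simpl INR; rewrite !Rmult_0_l; apply Hloc; rewrite Rabs_R0; lra.
    - rewrite S_INR, Rmult_plus_distr_r, Rmult_1_l, Hphi, IH, Hloc, cmul_cis by auto.
      f_equal; ring. }
  destruct (INR_unbounded (Rabs t / delta)) as [n Hn].
  assert (Hn0 : 0 < INR n).
  { pose proof (Rabs_pos t); assert (0 <= Rabs t / delta) by (apply Rmult_le_pos; [lra | apply Rlt_le, Rinv_0_lt_compat, Hd]); lra. }
  replace t with (INR n * (t / INR n)) by (field; lra); apply Hpow.
  unfold Rdiv; rewrite Rabs_mult, (Rabs_right (/ INR n)) by (apply Rle_ge, Rlt_le, Rinv_0_lt_compat, Hn0).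
  apply (Rmult_lt_reg_r (INR n)); auto; rewrite Rmult_assoc, Rinv_l by lra.
  apply (Rmult_gt_compat_r delta) in Hn; auto; unfold Rdiv in Hn.
  rewrite Rmult_assoc, Rinv_l in Hn by lra; lra.
Qed.

Lemma lin_axis a k t : lin a (RN_scal t (RN_unit k)) = a k * t.
Proof.
  unfold lin; rewrite (RN_sum_bound _ _ (S k)).
  - rewrite <- (sum_f_R0_single (a k * t) k (S k)) by lia.
    apply sum_eq; intros n _; change (a n * (t * RNv (RN_unit k) n) =
                                      (if Nat.eqb n k then a k * t else 0)).
    rewrite RN_unit_val; destruct (Nat.eqb_spec n k); subst; ring.
  - intros; ring.
  - intros n Hn; change (t * RNv (RN_unit k) n = 0); rewrite RN_unit_val.
    destruct (Nat.eqb_spec n k); [lia | ring].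
Qed.

Lemma lin_zero a : lin a RN_zero = 0.
Proof.
  pose proof (lin_add a RN_zero RN_zero) as E.
  replace (RN_add RN_zero RN_zero) with RN_zero in E by RN_eq; lra.
Qed.

(* A homomorphism [RN -> S] sending a neighbourhood [small] of [0] (for [wnorm v] and the
   sup norm) into the sector [|Im| < Re] has a logarithm [ell] there, additive on [small];
   restricted to the axes [ell] is linear, which gives [chi = cis o lin slope]. *)
Section SectorCharacter.
Variable chi : RN -> R * R.
Hypothesis chi_circle : forall x, on_circle (chi x).
Hypothesis chi_add : forall x y, chi (RN_add x y) = cmul (chi x) (chi y).
Variables (v : nat -> R) (d : R).
Hypothesis Hv : null_weights v.
Hypothesis Hd : 0 < d.

Definition small (z : RN) : Prop := wnorm v z <= 1 /\ forall k, Rabs (RNv z k) < d.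

Hypothesis chi_sector : forall z, small z -> Rabs (snd (chi z)) < fst (chi z).

Definition ell (z : RN) : R := sector_arg (chi z).

Lemma chi_zero : chi RN_zero = (1, 0).
Proof.
  apply circle_idempotent; [apply chi_circle|].
  rewrite <- chi_add; f_equal; RN_eq.
Qed.

Lemma ell_zero : ell RN_zero = 0.
Proof. unfold ell, sector_arg; rewrite chi_zero; simpl; unfold Rdiv; rewrite Rmult_0_l; apply atan_0. Qed.

Lemma ell_spec z : small z -> chi z = cis (ell z) /\ Rabs (ell z) < PI / 4.
Proof.
  intros Hz; destruct (sector_arg_spec (chi z) (chi_circle z) (chi_sector z Hz)); auto.
Qed.

Lemma ell_add x y : small x -> small y -> small (RN_add x y) ->
  ell (RN_add x y) = ell x + ell y.
Proof.
  intros Hx Hy Hxy.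
  destruct (ell_spec x Hx) as [E1 B1], (ell_spec y Hy) as [E2 B2], (ell_spec _ Hxy) as [E3 B3].
  apply cis_inj_local; [rewrite <- E3, chi_add, E1, E2, cmul_cis; reflexivity|].
  apply Rabs_def2 in B1; apply Rabs_def2 in B2; apply Rabs_def2 in B3.
  pose proof PI_RGT_0; apply Rabs_def1; lra.
Qed.

Definition radius (k : nat) : R := Rmin d (/ (v k + 1)).

Lemma radius_pos k : 0 < radius k.
Proof. apply Rmin_pos; auto; apply Rinv_0_lt_compat; pose proof (proj1 Hv k); lra. Qed.

Lemma small_axis k t : Rabs t < radius k -> small (RN_scal t (RN_unit k)).
Proof.
  intros Ht; pose proof (Rmin_l d (/ (v k + 1))); pose proof (Rmin_r d (/ (v k + 1))).
  fold (radius k) in *; pose proof (proj1 Hv k) as Hvk; split.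
  - rewrite wnorm_scal, wnorm_unit.
    assert (Rabs t * (v k + 1) < 1).
    { apply Rlt_le_trans with (/ (v k + 1) * (v k + 1)); [apply Rmult_lt_compat_r; lra|].
      rewrite Rinv_l; lra. }
    pose proof (Rabs_pos t); nra.
  - intros n; simpl; destruct (Nat.eqb n k); [rewrite Rmult_1_r | rewrite Rmult_0_r, Rabs_R0]; lra.
Qed.

Definition slope (k : nat) : R :=
  ell (RN_scal (radius k / 2) (RN_unit k)) / (radius k / 2).

Lemma RN_scal_plus_axis s t k :
  RN_scal (s + t) (RN_unit k) = RN_add (RN_scal s (RN_unit k)) (RN_scal t (RN_unit k)).
Proof. RN_eq. Qed.

Lemma ell_axis k t : Rabs t < radius k -> ell (RN_scal t (RN_unit k)) = t * slope k.
Proof.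
  apply (locally_additive_linear (fun t => ell (RN_scal t (RN_unit k))) _ (PI / 4)).
  - apply radius_pos.
  - intros s u Hs Hu Hsu; rewrite RN_scal_plus_axis; apply ell_add; try apply small_axis; auto.
    rewrite <- RN_scal_plus_axis; apply small_axis, Hsu.
  - intros u Hu; apply Rlt_le, ell_spec, small_axis, Hu.
Qed.

Lemma chi_axis k t : chi (RN_scal t (RN_unit k)) = cis (slope k * t).
Proof.
  apply (circle_hom_extend (fun t => chi (RN_scal t (RN_unit k))) _ (radius k)).
  - apply radius_pos.
  - intros s u; rewrite RN_scal_plus_axis; apply chi_add.
  - intros s Hs; destruct (ell_spec _ (small_axis k s Hs)) as [E _].
    rewrite E, ell_axis, Rmult_comm; auto.
Qed.

Lemma chi_lin z : chi z = cis (lin slope z).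
Proof.
  induction z as [|x k t Hx IH] using RN_ind.
  - rewrite chi_zero, lin_zero, cis_0; reflexivity.
  - rewrite chi_add, IH, chi_axis, cmul_cis, lin_add, lin_axis; reflexivity.
Qed.

Lemma ell_push_axis x k s : small x -> (supp_bound x <= k)%nat -> 0 < s < d -> s <= 1 / 2 ->
  v k < 1 -> wnorm v x + s * v k <= 1 ->
  let y := RN_add x (RN_scal (s * sgn (slope k)) (RN_unit k)) in
  small y /\ wnorm v y <= wnorm v x + s * v k /\ ell y = ell x + s * Rabs (slope k).
Proof.
  intros Hx Hk Hs Hs2 Hvk Hsum y.
  assert (Habs : Rabs (s * sgn (slope k)) = s) by (rewrite Rabs_mult, Rabs_sgn, Rabs_right; lra).
  assert (Hsk : Rabs (s * sgn (slope k)) < radius k).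
  { rewrite Habs; apply Rmin_glb_lt; [lra|].
    assert (/ 2 < / (v k + 1)) by (apply Rinv_lt_contravar; pose proof (proj1 Hv k); nra); lra. }
  assert (Hy : small (RN_scal (s * sgn (slope k)) (RN_unit k))) by (apply small_axis, Hsk).
  assert (Qy : wnorm v y <= wnorm v x + s * v k).
  { eapply Rle_trans; [apply wnorm_add, Hv|]; rewrite wnorm_scal, wnorm_unit, Habs; lra. }
  assert (Hxy : small y).
  { split; [lra|]; intros n; unfold y; simpl; destruct (Nat.eqb_spec n k) as [->|].
    - rewrite supp_bound_spec, Rmult_1_r, Rplus_0_l, Habs by lia; lra.
    - rewrite Rmult_0_r, Rplus_0_r; apply Hx. }
  split; [exact Hxy | split; [exact Qy|]].
  unfold y; rewrite ell_add, (ell_axis k) by auto.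
  rewrite <- sgn_mul_self; ring.
Qed.

Lemma small_large_ell eps : 0 < eps ->
  (forall N, exists k, (N <= k)%nat /\ eps <= Rabs (slope k)) ->
  forall m : nat, (1 <= m)%nat -> exists x, small x /\ INR m * (eps * (Rmin d 1 / 2)) <= ell x.
Proof.
  intros He Inf m Hm; set (s := Rmin d 1 / 2); set (eta := / INR m).
  assert (Hs : 0 < s /\ s < d /\ s <= 1 / 2).
  { pose proof (Rmin_l d 1); pose proof (Rmin_r d 1).
    assert (0 < Rmin d 1) by (apply Rmin_pos; lra); unfold s; lra. }
  assert (Hm1 : 1 <= INR m) by (apply (le_INR 1); auto).
  assert (Heta : 0 < eta /\ INR m * eta = 1 /\ eta <= 1).
  { unfold eta; split; [apply Rinv_0_lt_compat; lra|]; split; [field; lra|].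
    rewrite <- Rinv_1; apply Rinv_le_contravar; lra. }
  cut (forall j, (j <= m)%nat ->
         exists x, small x /\ wnorm v x <= INR j * eta /\ INR j * (eps * s) <= ell x).
  { intros Step; destruct (Step m (le_n m)) as [x [Hx [_ Hl]]]; exists x; auto. }
  induction j as [|j IH]; intros Hj.
  { exists RN_zero; rewrite ell_zero; split; [split|].
    - rewrite wnorm_zero; lra.
    - intros k; simpl; rewrite Rabs_R0; exact Hd.
    - rewrite wnorm_zero; simpl; lra. }
  destruct (IH ltac:(lia)) as [x [Hx [Qx Lx]]].
  destruct (proj2 Hv eta (proj1 Heta)) as [N1 HN1].
  destruct (Inf (Nat.max (supp_bound x) N1)) as [k [Hk Hak]].
  assert (Hvk : v k < eta).
  { specialize (HN1 k ltac:(lia)); unfold Rdist in HN1; rewrite Rminus_0_r in HN1.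
    rewrite Rabs_right in HN1; [lra | apply Rle_ge, Hv]. }
  assert (Hsv : s * v k <= eta) by (pose proof (proj1 Hv k); nra).
  assert (Hj1 : INR (S j) * eta <= 1)
    by (rewrite <- (proj1 (proj2 Heta)); apply Rmult_le_compat_r; [lra | apply le_INR; auto]).
  rewrite S_INR in *.
  destruct (ell_push_axis x k s Hx ltac:(lia) ltac:(lra) ltac:(lra) ltac:(lra) ltac:(lra))
    as [Hy [Qy Ly]].
  eexists; split; [exact Hy | split; [lra | rewrite Ly; nra]].
Qed.

Lemma slope_null : Un_cv slope 0.
Proof.
  intros eps He; apply NNPP; intros Hno.
  assert (Inf : forall N, exists k, (N <= k)%nat /\ eps <= Rabs (slope k)).
  { intros N; apply NNPP; intros Hk; apply Hno; exists N; intros n Hn.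
    unfold Rdist; rewrite Rminus_0_r; apply Rnot_le_lt; intros Hle; apply Hk; exists n; auto. }
  set (s := Rmin d 1 / 2).
  assert (Hs : 0 < s) by (unfold s; pose proof (Rmin_pos d 1 Hd Rlt_0_1); lra).
  destruct (INR_unbounded (PI / 4 / (eps * s))) as [m Hm].
  assert (Hes : 0 < eps * s) by (apply Rmult_lt_0_compat; auto).
  assert (Hm' : PI / 4 < INR m * (eps * s)).
  { apply (Rmult_gt_compat_r (eps * s)) in Hm; auto.
    unfold Rdiv in Hm; rewrite Rmult_assoc, Rinv_l in Hm; lra. }
  assert (Hm1 : (1 <= m)%nat) by (destruct m; [simpl in Hm'; pose proof PI_RGT_0; lra | lia]).
  destruct (small_large_ell eps He Inf m Hm1) as [x [Hx Lx]].
  destruct (ell_spec x Hx) as [_ Bx]; apply Rabs_def2 in Bx; fold s in Lx; lra.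
Qed.
End SectorCharacter.

(** * The topology [T_H] *)

Lemma nbhd_point {X} (tau : (X -> Prop) -> Prop) x V : nbhd tau x V -> V x.
Proof. intros [O [_ [Ox OV]]]; auto. Qed.

Lemma nbhd_inter {X} (tau : (X -> Prop) -> Prop) x U V : is_topology tau ->
  nbhd tau x U -> nbhd tau x V -> nbhd tau x (fun y => U y /\ V y).
Proof.
  intros Ht [O1 [H1 [O1x O1U]]] [O2 [H2 [O2x O2V]]]; exists (fun y => O1 y /\ O2 y).
  split; [apply Ht; auto | split; auto]; intros y []; auto.
Qed.

Lemma open_nbhd {X} (tau : (X -> Prop) -> Prop) x O : tau O -> O x -> nbhd tau x O.
Proof. intros; exists O; auto. Qed.

Lemma sum_half_powers N : sum_f_R0 (fun k => (/ 2) ^ S k) N = 1 - (/ 2) ^ S N.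
Proof.
  induction N as [|N IH]; [simpl; field|].
  rewrite tech5, IH; change ((/ 2) ^ S (S N)) with (/ 2 * (/ 2) ^ S N); field.
Qed.

Section InducedTopology.
Variables (H : Type) (addH : H -> H -> H) (oppH : H -> H) (zeroH : H)
  (tauH : (H -> Prop) -> Prop).
Hypothesis HtopG : is_abelian_topgroup addH oppH zeroH tauH.
Variable h : R -> H.
Hypothesis hhom : forall a b, h (a + b) = addH (h a) (h b).

Let c0 := is_c0 zeroH tauH.
Let T := T_H2 h.
Let F0o := F0_open addH zeroH tauH.
Let tH := tau_TH addH zeroH tauH h.

Lemma H_assoc a b c : addH a (addH b c) = addH (addH a b) c.
Proof. apply HtopG. Qed.
Lemma H_comm a b : addH a b = addH b a.
Proof. apply HtopG. Qed.
Lemma H_add0 a : addH a zeroH = a.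
Proof. apply HtopG. Qed.
Lemma H_addN a : addH a (oppH a) = zeroH.
Proof. apply HtopG. Qed.

Lemma H_opp0 : oppH zeroH = zeroH.
Proof.
  transitivity (addH zeroH (oppH zeroH)); [rewrite H_comm, H_add0; reflexivity | apply H_addN].
Qed.

Lemma H_add_cancel a b c : addH a b = addH a c -> b = c.
Proof.
  intros E; rewrite <- (H_add0 b), <- (H_add0 c), <- (H_addN a), !H_assoc,
    !(H_comm _ a), E; reflexivity.
Qed.

Lemma H_add_sub_cancel a b : addH (addH a b) (oppH a) = b.
Proof. rewrite (H_comm a b), <- H_assoc, H_addN; apply H_add0. Qed.

Lemma h_zero : h 0 = zeroH.
Proof. apply (H_add_cancel (h 0)); rewrite <- hhom, H_add0, Rplus_0_r; reflexivity. Qed.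

Lemma h_opp a : h (- a) = oppH (h a).
Proof. apply (H_add_cancel (h a)); rewrite <- hhom, H_addN, Rplus_opp_r; apply h_zero. Qed.

Lemma h_sub a b : h (a - b) = addH (h a) (oppH (h b)).
Proof. unfold Rminus; rewrite hhom, h_opp; reflexivity. Qed.

Lemma nbhd_half V : nbhd tauH zeroH V ->
  exists V', nbhd tauH zeroH V' /\ forall a b, V' a -> V' b -> V (addH a b).
Proof.
  intros [O [HO [O0 OV]]]; destruct HtopG as [_ [Htop [Hc2 _]]].
  destruct (Hc2 zeroH zeroH O HO) as [U1 [U2 [HU1 [HU2 [U10 [U20 HU]]]]]]; [rewrite H_add0; auto|].
  exists (fun y => U1 y /\ U2 y); split; [apply nbhd_inter; auto; apply open_nbhd; auto|].
  intros a b [] []; auto.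
Qed.

Lemma nbhd_opp V : nbhd tauH zeroH V -> exists V', nbhd tauH zeroH V' /\ forall a, V' a -> V (oppH a).
Proof.
  intros [O [HO [O0 OV]]]; destruct HtopG as [_ [_ [_ Hc1]]].
  destruct (Hc1 zeroH O HO) as [U [HU [U0 HUO]]].
  { rewrite H_opp0; exact O0. }
  exists U; split; [apply open_nbhd|]; auto.
Qed.

Lemma c0_zero : c0 (fun _ => zeroH).
Proof. intros U HU; exists O; intros; eapply nbhd_point; eauto. Qed.

Lemma c0_add y z : c0 y -> c0 z -> c0 (fun n => addH (y n) (z n)).
Proof.
  intros Hy Hz U HU; destruct (nbhd_half U HU) as [V [HV HVU]].
  destruct (Hy V HV) as [N1 H1], (Hz V HV) as [N2 H2].
  exists (Nat.max N1 N2); intros n Hn; apply HVU; [apply H1 | apply H2]; lia.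
Qed.

Lemma c0_T x : c0 (T x).
Proof.
  intros U HU; exists (supp_bound x); intros n Hn; unfold T, T_H2.
  rewrite supp_bound_spec, h_zero by auto; eapply nbhd_point; eauto.
Qed.

Definition F0_interior (S : (nat -> H) -> Prop) (b : nat -> H) : Prop :=
  exists V, nbhd tauH zeroH V /\
    forall y, c0 y -> (forall n, V (y n)) -> S (fun n => addH (b n) (y n)).

Lemma F0_interior_open S : F0o (F0_interior S).
Proof.
  intros b Hb [V [HV HS]]; destruct (nbhd_half V HV) as [V' [HV' HVV]].
  exists V'; split; auto; intros y Hy HyV; exists V'; split; auto; intros z Hz HzV.
  replace (fun n => addH (addH (b n) (y n)) (z n)) with (fun n => addH (b n) (addH (y n) (z n)))
    by (apply functional_extensionality; intros; apply H_assoc).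
  apply HS; [apply c0_add | intros; apply HVV]; auto.
Qed.

Lemma F0_interior_sub S b : F0_interior S b -> S b.
Proof.
  intros [V [HV HS]]; specialize (HS _ c0_zero (fun n => nbhd_point _ _ _ HV)).
  replace b with (fun n => addH (b n) zeroH); auto.
  apply functional_extensionality; intros; apply H_add0.
Qed.

Lemma F0_open_True : F0o (fun _ => True).
Proof.
  intros b _ _; exists (fun _ => True); split; auto.
  exists (fun _ => True); split; [apply HtopG | auto].
Qed.

Lemma F0_open_inter B1 B2 : F0o B1 -> F0o B2 -> F0o (fun b => B1 b /\ B2 b).
Proof.
  intros H1 H2 b Hb [b1 b2].
  destruct (H1 b Hb b1) as [V1 [HV1 P1]], (H2 b Hb b2) as [V2 [HV2 P2]].
  exists (fun a => V1 a /\ V2 a); split; [apply nbhd_inter; auto; apply HtopG|].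
  intros y Hy HyV; split; [apply P1 | apply P2]; auto; intros n; apply HyV.
Qed.

Lemma tH_product A B : nu_open A -> F0o B -> tH (fun x => A x /\ B (T x)).
Proof.
  intros HA HB; exists (fun a b => A a /\ B b); split; [|intros; tauto].
  intros a b Hb [Aa Bb]; exists A, B; repeat split; auto.
Qed.

Lemma tH_ext U U' : (forall x, U x <-> U' x) -> tH U' -> tH U.
Proof. intros E [W [HW HU]]; exists W; split; auto; intros x; rewrite E; apply HU. Qed.

Lemma tH_decomp U x : tH U -> U x ->
  exists A B, nu_open A /\ A x /\ F0o B /\ B (T x) /\ forall x', A x' -> B (T x') -> U x'.
Proof.
  intros [W [HW HU]] Ux; apply HU in Ux.
  destruct (HW x (T x) (c0_T x) Ux) as [A [B [HA [Ax [HB [Bx HAB]]]]]].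
  exists A, B; repeat split; auto; intros x' A' B'; apply HU, HAB; auto; apply c0_T.
Qed.

Lemma nu_open_inter U V : nu_open U -> nu_open V -> nu_open (fun x => U x /\ V x).
Proof.
  intros HU HV x [Ux Vx]; destruct (HU x Ux) as [l1 [H1 H1']], (HV x Vx) as [l2 [H2 H2']].
  exists (l1 ++ l2); split.
  - intros p Hp; apply in_app_or in Hp; destruct Hp; auto.
  - intros y Hy; split; [apply H1' | apply H2']; intros; apply Hy, in_or_app; auto.
Qed.

Lemma nu_open_True : nu_open (fun _ => True).
Proof. intros x _; exists nil; split; simpl; tauto. Qed.

Lemma tH_topology : is_topology tH.
Proof.
  split; [|split].
  - apply (tH_ext _ (fun x => True /\ True)); [tauto|].
    apply (tH_product (fun _ => True) (fun _ => True) nu_open_True F0_open_True).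
  - intros F HF.
    exists (fun a b => exists U, F U /\ exists W, prod_open addH zeroH tauH W /\
                         (forall x, U x <-> W x (T x)) /\ W a b); split.
    + intros a b Hb [U [FU [W [HW [E Wab]]]]].
      destruct (HW a b Hb Wab) as [A [B [HA [Aa [HB [Bb HAB]]]]]].
      exists A, B; repeat split; auto; intros a' b' Hb' A' B'.
      exists U; split; auto; exists W; auto.
    + intros x; split.
      * intros [U [FU Ux]]; destruct (HF U FU) as [W [HW E]].
        exists U; split; auto; exists W; split; [|split]; auto; apply E; auto.
      * intros [U [FU [W [HW [E Wx]]]]]; exists U; split; auto; apply E; auto.
  - intros U V [W1 [HW1 E1]] [W2 [HW2 E2]]; exists (fun a b => W1 a b /\ W2 a b); split.
    + intros a b Hb [w1 w2].
      destruct (HW1 a b Hb w1) as [A1 [B1 [HA1 [A1a [HB1 [B1b P1]]]]]].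
      destruct (HW2 a b Hb w2) as [A2 [B2 [HA2 [A2a [HB2 [B2b P2]]]]]].
      exists (fun z => A1 z /\ A2 z), (fun z => B1 z /\ B2 z); repeat split; auto.
      * apply nu_open_inter; auto.
      * apply F0_open_inter; auto.
      * apply P1; tauto.
      * apply P2; tauto.
    + intros x; rewrite E1, E2; tauto.
Qed.

Lemma T_sub_add x x' : T x' = (fun n => addH (T x n) (T (RN_sub x' x) n)).
Proof.
  apply functional_extensionality; intros n; unfold T, T_H2, RN_sub; simpl.
  rewrite <- hhom; f_equal; ring.
Qed.

Lemma tH_basis O x : tH O -> O x ->
  exists w V, null_weights w /\ nbhd tauH zeroH V /\
    forall x', wnorm w (RN_sub x' x) <= 1 -> (forall n, V (h (RNv x' n - RNv x n))) -> O x'.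
Proof.
  intros HO Ox; destruct (tH_decomp O x HO Ox) as [A [B [HA [Ax [HB [Bx HAB]]]]]].
  destruct (nu_weights A x HA Ax) as [w [Hw HwA]].
  destruct (HB _ (c0_T x) Bx) as [V [HV HBV]].
  exists w, V; split; [|split]; auto; intros x' Hx' HVx'.
  apply HAB; [apply HwA, Hx'|]; rewrite (T_sub_add x x'); apply HBV; [apply c0_T | apply HVx'].
Qed.

Lemma tH_basic_open w V x : null_weights w -> nbhd tauH zeroH V ->
  exists O, tH O /\ O x /\
    forall x', O x' -> wnorm w (RN_sub x' x) < 1 /\ forall n, V (h (RNv x' n - RNv x n)).
Proof.
  intros Hw HV.
  set (S := fun b : nat -> H => forall n, V (addH (b n) (oppH (T x n)))).
  exists (fun x' => wball w x 1 x' /\ F0_interior S (T x')); split; [|split; [split|]].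
  - apply (tH_product (wball w x 1) (F0_interior S)); [|apply F0_interior_open].
    apply (wopen_nu_open w); [exact Hw | apply wball_open, Hw].
  - apply wball_center; lra.
  - exists V; split; auto; intros y _ Hy n; rewrite H_add_sub_cancel; apply Hy.
  - intros x' [Hb HS]; split; [exact Hb|].
    intros n; rewrite h_sub; apply (F0_interior_sub S _ HS).
Qed.

Lemma tH_add_continuous : cont2 tH RN_add.
Proof.
  intros x y W HW Wxy; destruct (tH_basis W _ HW Wxy) as [w [V [Hw [HV HWV]]]].
  destruct (nbhd_half V HV) as [V' [HV' HVV]].
  assert (Hw2 := null_weights_add w w Hw Hw).
  destruct (tH_basic_open _ V' x Hw2 HV') as [O1 [HO1 [O1x P1]]].
  destruct (tH_basic_open _ V' y Hw2 HV') as [O2 [HO2 [O2y P2]]].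
  exists O1, O2; repeat split; auto; intros x' y' Ox' Oy'.
  destruct (P1 x' Ox') as [N1 V1], (P2 y' Oy') as [N2 V2].
  rewrite wnorm_weights_add in N1, N2; apply HWV.
  - replace (RN_sub (RN_add x' y') (RN_add x y)) with (RN_add (RN_sub x' x) (RN_sub y' y))
      by (unfold RN_sub; RN_eq).
    pose proof (wnorm_add w (RN_sub x' x) (RN_sub y' y) (proj1 Hw)); lra.
  - intros n; simpl; replace (RNv x' n + RNv y' n - (RNv x n + RNv y n))
      with ((RNv x' n - RNv x n) + (RNv y' n - RNv y n)) by ring.
    rewrite hhom; apply HVV; auto.
Qed.

Lemma tH_opp_continuous : Defs.cont1 tH RN_opp.
Proof.
  intros x W HW Wx; destruct (tH_basis W _ HW Wx) as [w [V [Hw [HV HWV]]]].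
  destruct (nbhd_opp V HV) as [V' [HV' HVV]].
  destruct (tH_basic_open _ V' x Hw HV') as [O [HO [Ox P]]].
  exists O; repeat split; auto; intros x' Ox'; destruct (P x' Ox') as [N1 V1]; apply HWV.
  - replace (RN_sub (RN_opp x') (RN_opp x)) with (RN_opp (RN_sub x' x)) by (unfold RN_sub; RN_eq).
    rewrite wnorm_opp; lra.
  - intros n; simpl; replace (- RNv x' n - - RNv x n) with (- (RNv x' n - RNv x n)) by ring.
    rewrite h_opp; apply HVV, V1.
Qed.

Lemma tH_group_topology : is_group_topology RN_add RN_opp tH.
Proof. split; [apply tH_topology | split; [apply tH_add_continuous | apply tH_opp_continuous]]. Qed.

Lemma nu_open_tH U : nu_open U -> tH U.
Proof.
  intros HU; apply (tH_ext _ (fun x => U x /\ True)); [tauto|].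
  apply (tH_product U (fun _ => True) HU F0_open_True).
Qed.

Hypothesis hcont : forall a W, tauH W -> W (h a) ->
  exists d, 0 < d /\ forall b, Rabs (b - a) < d -> W (h b).

Lemma tH_box_ball O x : tH O -> O x ->
  exists w d, null_weights w /\ 0 < d /\
    forall z, wnorm w (RN_sub z x) <= 1 -> (forall n, Rabs (RNv z n - RNv x n) < d) -> O z.
Proof.
  intros HO Ox; destruct (tH_basis O x HO Ox) as [w [V [Hw [[OV [HOV [OV0 OVV]]] HwV]]]].
  destruct (hcont 0 OV HOV) as [d [Hd Hhd]]; [rewrite h_zero; exact OV0|].
  exists w, d; split; [|split]; auto; intros z Hz Hzd; apply HwV; auto.
  intros n; apply OVV, Hhd; rewrite Rminus_0_r; apply Hzd.
Qed.

Lemma tH_box_open U : tH U -> box_open U.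
Proof.
  intros HU x Ux; destruct (tH_box_ball U x HU Ux) as [w [d [[Hw _] [Hd HwU]]]].
  assert (Hp : forall n, 0 < (/ 2) ^ S n) by (intros; apply pow_lt; lra).
  exists (fun n => Rmin d ((/ 2) ^ S n / (w n + 1))); split.
  { intros n; apply Rmin_pos; auto; apply Rdiv_lt_0_compat; [apply Hp | specialize (Hw n); lra]. }
  intros y Hy; apply HwU.
  - rewrite (wnorm_bound w _ (Nat.max (supp_bound y) (supp_bound x))).
    2:{ intros n Hn; unfold RN_sub; simpl; rewrite !supp_bound_spec by lia; ring. }
    eapply Rle_trans; [apply (sum_Rle _ (fun k => (/ 2) ^ S k))|].
    + intros k _; specialize (Hy k); specialize (Hw k).
      pose proof (Rmin_r d ((/ 2) ^ S k / (w k + 1))) as Hm.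
      apply Rle_trans with (w k * ((/ 2) ^ S k / (w k + 1))).
      * apply Rmult_le_compat_l; auto; simpl RNv; unfold Rminus in Hy; lra.
      * apply (Rmult_le_reg_r (w k + 1)); [lra|].
        unfold Rdiv; rewrite Rmult_assoc, Rmult_assoc, Rinv_l, Rmult_1_r by lra.
        pose proof (Hp k); nra.
    + rewrite sum_half_powers; pose proof (Hp (Nat.max (supp_bound y) (supp_bound x))); lra.
  - intros n; specialize (Hy n); pose proof (Rmin_l d ((/ 2) ^ S n / (w n + 1))); lra.
Qed.

Lemma tH_coord_continuous k : continuous_map tH tauH (fun x => h (RNv x k)).
Proof.
  intros x W HW Wx; destruct HtopG as [_ [_ [Hc2 _]]].
  assert (HB : F0o (fun b => W (b k))).
  { intros b _ Wb.
    destruct (Hc2 (b k) zeroH W HW) as [U1 [U2 [HU1 [HU2 [U1b [U20 HU]]]]]]; [rewrite H_add0; exact Wb|].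
    exists U2; split; [apply open_nbhd; auto|]; intros y _ Hy; apply HU; auto. }
  exists (fun x' => True /\ W (T x' k)); split; [|split; [split; auto | intros y [_ Wy]; exact Wy]].
  apply (tH_product (fun _ => True) (fun b => W (b k)) nu_open_True HB).
Qed.

Hypothesis Hlqc : locally_quasi_convex addH zeroH tauH.

Lemma tH_locally_quasi_convex : locally_quasi_convex RN_add RN_zero tH.
Proof.
  intros U [O [HO [O0 OU]]].
  destruct (tH_basis O RN_zero HO O0) as [w [V [Hw [HV HwV]]]].
  destruct (Hlqc V HV) as [V' [HV' [QV' V'V]]].
  exists (fun x => wnorm w x <= 1 /\ forall n, V' (h (RNv x n))); split; [|split].
  - destruct (tH_basic_open w V' RN_zero Hw HV') as [O' [HO' [O'0 P]]].
    exists O'; split; [exact HO' | split; [exact O'0|]].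
    intros x Ox; destruct (P x Ox) as [N1 V1]; rewrite RN_sub_0_r in N1; split; [lra|].
    intros n; specialize (V1 n); simpl in V1; rewrite Rminus_0_r in V1; exact V1.
  - apply quasi_convex_inter.
    + apply (quasi_convex_mono _ nu_open); [apply nu_open_tH | apply wnorm_ball_quasi_convex, Hw].
    + apply quasi_convex_forall; intros n.
      apply (quasi_convex_preimage _ addH _ tauH); [intros; apply hhom | apply tH_coord_continuous | exact QV'].
  - intros x [Hx HxV]; apply OU, HwV; [rewrite RN_sub_0_r; exact Hx|].
    intros n; simpl; rewrite Rminus_0_r; apply V'V, HxV.
Qed.

Lemma tH_character_sector chi : is_character RN_add tH chi ->
  exists v d, null_weights v /\ 0 < d /\
    forall z, small v d z -> Rabs (snd (chi z)) < fst (chi z).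
Proof.
  intros [Ci [Ch Cc]].
  assert (C0 : chi RN_zero = (1, 0)).
  { apply circle_idempotent; [apply Ci | rewrite <- Ch; f_equal; RN_eq]. }
  destruct (Cc RN_zero (1 / 2) ltac:(lra)) as [O [HO [O0 HOc]]].
  destruct (tH_box_ball O RN_zero HO O0) as [v [d [Hv [Hd HvO]]]].
  exists v, d; split; [|split]; auto; intros z [Hz1 Hz2].
  assert (Oz : O z).
  { apply HvO; [rewrite RN_sub_0_r; exact Hz1 | intros n; simpl; rewrite Rminus_0_r; apply Hz2]. }
  pose proof (HOc z Oz) as P; rewrite C0 in P; apply near_one_sector, P.
Qed.

Lemma tH_character_nu chi : is_character RN_add tH chi -> is_character RN_add nu_open chi.
Proof.
  intros Hchi; destruct (tH_character_sector chi Hchi) as [v [d [Hv [Hd Hsec]]]].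
  destruct Hchi as [Ci [Ch _]].
  replace chi with (fun z => cis (lin (slope chi v d) z))
    by (apply functional_extensionality; intros z; symmetry; eapply chi_lin; eauto).
  apply (lin_character _ (fun k => Rabs (slope chi v d k)) 1); [|lra | apply lin_add |].
  - split; [intros; apply Rabs_pos|].
    pose proof (cv_cvabs _ _ (slope_null chi Ci Ch v d Hv Hd Hsec)) as C; rewrite Rabs_R0 in C; exact C.
  - intros z; rewrite Rmult_1_l; apply lin_bound; intros; lra.
Qed.
End InducedTopology.

Theorem mainTheorem5
  (H : Type) (addH : H -> H -> H) (oppH : H -> H) (zeroH : H)
  (tauH : (H -> Prop) -> Prop)
  (HtopG : is_abelian_topgroup addH oppH zeroH tauH)
  (Hlqc : locally_quasi_convex addH zeroH tauH)
  (h : R -> H)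
  (hhom : forall a b, h (a + b) = addH (h a) (h b))
  (hcont : forall a W, tauH W -> W (h a) ->
             exists d, 0 < d /\ forall b, Rabs (b - a) < d -> W (h b)) :
  let tH := tau_TH addH zeroH tauH h in
  is_group_topology RN_add RN_opp tH /\
  locally_quasi_convex RN_add RN_zero tH /\
  (forall U, tH U -> box_open U) /\
  (forall U, nu_open U -> tH U) /\
  (forall chi : RN -> R * R, is_character RN_add tH chi <-> is_character RN_add nu_open chi).
Proof.
  intros tH; split; [|split; [|split; [|split]]].
  - exact (tH_group_topology H addH oppH zeroH tauH HtopG h hhom).
  - exact (tH_locally_quasi_convex H addH oppH zeroH tauH HtopG h hhom Hlqc).
  - exact (tH_box_open H addH oppH zeroH tauH HtopG h hhom hcont).
  - exact (nu_open_tH H addH oppH zeroH tauH HtopG h).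
  - intros chi; split.
    + exact (tH_character_nu H addH oppH zeroH tauH HtopG h hhom hcont chi).
    + apply character_mono, (nu_open_tH H addH oppH zeroH tauH HtopG h).
Qed.
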